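(* Let $n$ be even and let $f,g:\mathbb{F}_2^n\to\mathbb{F}_2$ be bent functions with $g(\mathbf{x})=f(\mathbf{x}\oplus\mathbf{u})$ for all $\mathbf{x}$, for some $\mathbf{u}\in\mathbb{F}_2^n$. Then for all $\mathbf{x}\in\mathbb{F}_2^n$, $$(g\oplus s_2)(\mathbf{x})=\left(f\oplus s_2\oplus\mathbb{L}_{\mathbf{u}}\oplus s_2(\mathbf{u})\right)(\mathbf{x}\oplus\mathbf{u}),$$ (where $g\oplus s_2$ and $f\oplus s_2\oplus\mathbb{L}_{\mathbf{u}}\oplus s_2(\mathbf{u})$ are negabent functions), and the duals satisfy $\tilde g(\mathbf{x})=\tilde f(\mathbf{x})\oplus\mathbf{u}\cdot\mathbf{x}$ for all $\mathbf{x}$.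
   Context: $\mathbf{x}\cdot\mathbf{y}=\bigoplus_ix_iy_i$. $s_2(\mathbf{x})=\bigoplus_{1\le i<j\le n}x_ix_j$ is the quadratic symmetric Boolean function. $\mathbb{L}_{\mathbf{u}}(\mathbf{x})=\bigoplus_{i=1}^n x_i\left(\bigoplus_{j\neq i}u_j\right)$. Walsh–Hadamard transform $W_f(\boldsymbol{\omega})=2^{-n/2}\sum_{\mathbf{x}}(-1)^{f(\mathbf{x})\oplus\mathbf{x}\cdot\boldsymbol{\omega}}$; $f$ is bent if $W_f(\boldsymbol{\omega})=\pm1$ for all $\boldsymbol{\omega}$, and its dual $\tilde f$ satisfies $(-1)^{\tilde f(\mathbf{x})}=W_f(\mathbf{x})$. Nega-Hadamard transform $N_f(\boldsymbol{\omega})=2^{-n/2}\sum_{\mathbf{x}}(-1)^{f(\mathbf{x})\oplus\mathbf{x}\cdot\boldsymbol{\omega}}i^{wt(\mathbf{x})}$ ($wt$ = Hamming weight); $f$ is negabent if $|N_f(\boldsymbol{\omega})|=1$ for all $\boldsymbol{\omega}$. *)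

From HB Require Import structures.
From mathcomp Require Import all_boot all_order all_algebra all_field.
Set Implicit Arguments. Unset Strict Implicit. Unset Printing Implicit Defensive.
Import Order.TTheory GRing.Theory Num.Theory.
Local Open Scope ring_scope.

(* Vectors of F_2^n, with F_2 represented by bool and addition by xor (addb). *)
Definition vec (n : nat) := {ffun 'I_n -> bool}.

Definition xorv {n} (x y : vec n) : vec n := [ffun i => x i (+) y i].

Definition dotv {n} (x y : vec n) : bool := \big[addb/false]_(i < n) (x i && y i).

Definition s2 {n} (x : vec n) : bool :=
  \big[addb/false]_(i < n) \big[addb/false]_(j < n | (i < j)%N) (x i && x j).

Definition Lu {n} (u x : vec n) : bool :=
  \big[addb/false]_(i < n) (x i && \big[addb/false]_(j < n | j != i) u j).

Definition wt {n} (x : vec n) : nat := \sum_(i < n) (x i : nat).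

Definition sgn (b : bool) : algC := (-1) ^+ b.

Definition walsh {n} (f : vec n -> bool) (w : vec n) : algC :=
  (sqrtC 2%:R) ^- n * \sum_(x : vec n) sgn (f x (+) dotv x w).

Definition nega {n} (f : vec n -> bool) (w : vec n) : algC :=
  (sqrtC 2%:R) ^- n * \sum_(x : vec n) sgn (f x (+) dotv x w) * 'i ^+ wt x.

Definition bent {n} (f : vec n -> bool) : Prop :=
  forall w, walsh f w = 1 \/ walsh f w = -1.

Definition negabent {n} (f : vec n -> bool) : Prop :=
  forall w, `|nega f w| = 1.

Definition is_dual {n} (f ft : vec n -> bool) : Prop :=
  forall x, sgn (ft x) = walsh f x.

From mathcomp Require Import all_boot all_order all_algebra all_field.
From mathcomp Require Import ring.
Set Implicit Arguments. Unset Strict Implicit. Unset Printing Implicit Defensive.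
Import GRing.Theory Num.Theory.

(* s_2(x) is the parity of 'C(wt x, 2), so (-1)^{s_2(x)} i^{wt x} only depends on the
   parity of wt x and equals a + b (-1)^{x . 1} with a = (1+i)/2, b = (1-i)/2.  Hence the
   nega-Hadamard transform of f + s_2 at w is a W_f(w) + b W_f(w + 1), of modulus 1 as soon
   as W_f = +-1, and adding an affine function to f only translates its transforms.  The
   first identity is the expansion s_2(x + u) = s_2(x) + s_2(u) + L_u(x), with L_u linear,
   and the duals are related by the translation rule W_{f(. + u)}(x) = (-1)^{u . x} W_f(x). *)

Lemma big_neq_lt (R : Type) (idx : R) (op : Monoid.com_law idx) n
    (F : 'I_n -> 'I_n -> R) :
  \big[op/idx]_(i < n) \big[op/idx]_(j < n | j != i) F i j =
  op (\big[op/idx]_(i < n) \big[op/idx]_(j < n | (i < j)%N) F i j)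
     (\big[op/idx]_(i < n) \big[op/idx]_(j < n | (i < j)%N) F j i).
Proof.
rewrite [X in op _ X](exchange_big_dep xpredT) //= -big_split /=.
apply: eq_bigr => i _; rewrite (bigID (fun j : 'I_n => (i < j)%N)) /=.
by apply: f_equal2; apply: eq_bigl => j;
  rewrite -(inj_eq val_inj) /= neq_ltn; case: ltngtP.
Qed.

Lemma andb_bigxorr (I : finType) (P : pred I) (b : bool) (F : I -> bool) :
  b && \big[addb/false]_(j | P j) F j = \big[addb/false]_(j | P j) (b && F j).
Proof. by case: b => //=; rewrite big1. Qed.

Lemma odd_sum (I : finType) (P : pred I) (F : I -> nat) :
  odd (\sum_(i | P i) F i) = \big[addb/false]_(i | P i) odd (F i).
Proof. exact: (big_morph odd oddD). Qed.

Lemma bin2_of_sqr k p : (k * k = k + p.*2)%N -> p = 'C(k, 2).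
Proof.
move=> sqr_k; have dbl_p : (k * k.-1 = p.*2)%N.
  by rewrite -subn1 mulnBr muln1 sqr_k addKn.
by rewrite bin2 dbl_p doubleK.
Qed.

Section Vectors.

Variable n : nat.
Implicit Types x y u v w : vec n.

Definition onesv : vec n := [ffun=> true].

Definition Lu_vec u : vec n := [ffun i => \big[addb/false]_(j < n | j != i) u j].

Definition pairs_count x : nat :=
  \sum_(i < n) \sum_(j < n | (i < j)%N) (x i * x j).

Lemma xorvK u : cancel (xorv^~ u) (xorv^~ u).
Proof. by move=> x; apply/ffunP => i; rewrite !ffunE -addbA addbb addbF. Qed.

Lemma dotvC x y : dotv x y = dotv y x.
Proof. by apply: eq_bigr => i _; rewrite andbC. Qed.

Lemma dotv_xorvr x y v : dotv x (xorv y v) = dotv x y (+) dotv x v.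
Proof.
by rewrite /dotv -big_split; apply: eq_bigr => i _; rewrite ffunE; case: (x i).
Qed.

Lemma dotv_onesv x : dotv x onesv = odd (wt x).
Proof. by rewrite /wt odd_sum; apply: eq_bigr => i _; rewrite ffunE andbT oddb. Qed.

Lemma Lu_dotv u x : Lu u x = dotv x (Lu_vec u).
Proof. by apply: eq_bigr => i _; rewrite ffunE. Qed.

Lemma s2_xorv x u : s2 (xorv x u) = s2 x (+) s2 u (+) Lu u x.
Proof.
have -> : Lu u x =
    \big[addb/false]_(i < n) \big[addb/false]_(j < n | j != i) (x i && u j).
  by apply: eq_bigr => i _; rewrite andb_bigxorr.
rewrite big_neq_lt /s2 -!big_split; apply: eq_bigr => i _.
rewrite -!big_split; apply: eq_bigr => j _; rewrite !ffunE.
by case: (x i); case: (u i); case: (x j); case: (u j).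
Qed.

Lemma s2_pairs_count x : s2 x = odd (pairs_count x).
Proof.
rewrite odd_sum; apply: eq_bigr => i _; rewrite odd_sum; apply: eq_bigr => j _.
by rewrite oddM !oddb.
Qed.

Lemma wt_sqr x : (wt x * wt x = wt x + (pairs_count x).*2)%N.
Proof.
have diag_offdiag : (wt x * wt x = wt x +
    \sum_(i < n) \sum_(j < n | j != i) (x i * x j))%N.
  rewrite /wt big_distrl -big_split; apply: eq_bigr => i _.
  by rewrite big_distrr (bigD1 i) //= mulnb andbb.
rewrite diag_offdiag big_neq_lt -addnn; congr (_ + (_ + _))%N.
by apply: eq_bigr => i _; apply: eq_bigr => j _; rewrite mulnC.
Qed.

Lemma s2_bin2 x : s2 x = odd 'C(wt x, 2).
Proof. by rewrite s2_pairs_count (bin2_of_sqr (wt_sqr x)). Qed.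

End Vectors.

Local Open Scope ring_scope.

Lemma sgnD a b : sgn (a (+) b) = sgn a * sgn b.
Proof. by rewrite /sgn -signr_addb. Qed.

Lemma sgn_inj : injective sgn.
Proof.
have neq_opp1 : (1 : algC) != -1 by rewrite -addr_eq0 -mulr2n pnatr_eq0.
by case=> [] [] //= /eqP; rewrite /sgn ?(negbTE neq_opp1) // eq_sym (negbTE neq_opp1).
Qed.

Lemma norm_sgn b : `|sgn b| = 1.
Proof. by rewrite /sgn normr_sign. Qed.

Lemma sgn_bin2_expi k : sgn (odd 'C(k, 2)) * 'i ^+ k = if odd k then 'i else 1.
Proof.
elim: k => [|k IHk]; first by rewrite bin0n mulr1.
rewrite binS bin1 oddD sgnD exprSr mulrACA IHk /=.
by case: (odd k); rewrite /sgn ?mul1r // mulN1r mulrN -expr2 sqrCi opprK.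
Qed.

Definition halfpi : algC := (1 + 'i) / 2%:R.
Definition halfmi : algC := (1 - 'i) / 2%:R.

Lemma halfpi_add_halfmi : halfpi + halfmi = 1.
Proof. by rewrite /halfpi /halfmi; field. Qed.

Lemma halfpi_sub_halfmi : halfpi - halfmi = 'i.
Proof. by rewrite /halfpi /halfmi; field. Qed.

Lemma sgn_s2_expi_wt n (x : vec n) :
  sgn (s2 x) * 'i ^+ wt x = halfpi + halfmi * sgn (dotv x (onesv n)).
Proof.
rewrite s2_bin2 sgn_bin2_expi dotv_onesv /sgn.
by case: (odd (wt x)); rewrite ?expr0 ?expr1 ?mulr1 ?halfpi_add_halfmi // mulrN1 halfpi_sub_halfmi.
Qed.

Section Transforms.

Variable n : nat.
Implicit Types (f g : vec n -> bool) (x u v w : vec n).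

Lemma nega_ext f g : f =1 g -> nega f =1 nega g.
Proof. by move=> eq_fg w; rewrite /nega; congr (_ * _); apply: eq_bigr => x _; rewrite eq_fg. Qed.

Lemma negabent_ext f g : f =1 g -> negabent f -> negabent g.
Proof. by move=> eq_fg nb_f w; rewrite -(nega_ext eq_fg w). Qed.

Lemma nega_affine f v c w :
  nega (fun x => f x (+) dotv x v (+) c) w = sgn c * nega f (xorv v w).
Proof.
rewrite /nega [RHS]mulrCA; congr (_ * _); rewrite mulr_sumr.
by apply: eq_bigr => x _; rewrite dotv_xorvr !sgnD; ring.
Qed.

Lemma negabent_affine f v c :
  negabent f -> negabent (fun x => f x (+) dotv x v (+) c).
Proof. by move=> nb_f w; rewrite nega_affine normrM norm_sgn mul1r. Qed.

Lemma nega_add_s2 f w :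
  nega (fun x => f x (+) s2 x) w =
  halfpi * walsh f w + halfmi * walsh f (xorv w (onesv n)).
Proof.
rewrite /nega /walsh mulrCA (mulrCA _ (sqrtC _ ^- n)) -mulrDr; congr (_ * _).
rewrite !mulr_sumr -big_split; apply: eq_bigr => x _.
rewrite dotv_xorvr !sgnD (mulrAC (sgn (f x))) -[LHS]mulrA sgn_s2_expi_wt /=.
by ring.
Qed.

Lemma bent_negabent_s2 f : bent f -> negabent (fun x => f x (+) s2 x).
Proof.
move=> bent_f w; rewrite nega_add_s2.
case: (bent_f w) => ->; case: (bent_f (xorv w (onesv n))) => ->; rewrite ?mulr1 ?mulrN1.
- by rewrite halfpi_add_halfmi normr1.
- by rewrite halfpi_sub_halfmi normCi.
- by rewrite addrC -opprB normrN halfpi_sub_halfmi normCi.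
- by rewrite -opprD halfpi_add_halfmi normrN1.
Qed.

Lemma walsh_translate f g u :
  (forall x, g x = f (xorv x u)) -> forall w, walsh g w = sgn (dotv u w) * walsh f w.
Proof.
move=> def_g w; rewrite /walsh [RHS]mulrCA; congr (_ * _); rewrite mulr_sumr.
rewrite (reindex (xorv^~ u)) /=; last by exists (xorv^~ u) => x _; rewrite xorvK.
apply: eq_bigr => x _.
by rewrite def_g xorvK dotvC dotv_xorvr dotvC (dotvC w) !sgnD; ring.
Qed.

Lemma dual_translate f g u ft gt :
  (forall x, g x = f (xorv x u)) -> is_dual f ft -> is_dual g gt ->
  forall x, gt x = ft x (+) dotv u x.
Proof.
move=> def_g dual_f dual_g x; apply: sgn_inj.
by rewrite sgnD dual_g dual_f (walsh_translate def_g) mulrC.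
Qed.

End Transforms.

Theorem lemma3 (n : nat) (f g : vec n -> bool) (u : vec n) :
  ~~ odd n -> bent f -> bent g ->
  (forall x, g x = f (xorv x u)) ->
  [/\ (forall x, g x (+) s2 x =
                 f (xorv x u) (+) s2 (xorv x u) (+) Lu u (xorv x u) (+) s2 u),
      negabent (fun x => g x (+) s2 x),
      negabent (fun x => f x (+) s2 x (+) Lu u x (+) s2 u) &
      (forall ft gt : vec n -> bool, is_dual f ft -> is_dual g gt ->
         forall x, gt x = ft x (+) dotv u x)].
Proof.
move=> _ bent_f bent_g def_g; split.
- move=> x; rewrite def_g -[in s2 x](xorvK u x) s2_xorv.
  by case: (f _); case: (s2 (xorv x u)); case: (s2 u); case: (Lu _ _).
- exact: bent_negabent_s2.
- apply: negabent_ext (negabent_affine (Lu_vec u) (s2 u) (bent_negabent_s2 bent_f)).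
  by move=> x; rewrite Lu_dotv.
- by move=> ft gt; apply: dual_translate.
Qed.
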